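(* Let $D$ be a division algebra and let $n\ge 0$. For every proper two-sided ideal $I$ of the polynomial ring $D[t_1,\ldots,t_n]$ in $n$ central commuting variables over $D$, the quotient ring $S=D[t_1,\ldots,t_n]/I$ (which contains $D$ via $r\mapsto r+I$) is centrally normalizable over $D$. Equivalently, the tuple $(\mathrm{id}_D,\ldots,\mathrm{id}_D)$ is centrally normalizable over $D$.
   Context: All rings are associative with unity. A ring $S$ containing a division algebra $D$ is finite over a subring $R$ if $S$ is finitely generated as a left $R$-module. Elements $a_1,\ldots,a_m$ of $S$ centralize $D$ if $a_ib=ba_i$ for all $b\in D$. Commuting elements $a_1,\ldots,a_m\in S$ are (left) algebraically independent over $D$ if the monomials $a_1^{i_1}\cdots a_m^{i_m}$, $(i_1,\ldots,i_m)\in\mathbb{Z}_{\ge0}^m$, are left linearly independent over $D$. $S$ is centrally normalizable over $D$ if there exist $m\ge 0$ and commuting elements $a_1,\ldots,a_m\in S$ which centralize $D$, are left algebraically independent over $D$, and such that $S$ is finite (as a left module) over the subring $D[a_1,\ldots,a_m]$ generated by $D\cup\{a_1,\ldots,a_m\}$. A tuple of automorphisms is centrally normalizable over $D$ if every quotient of the corresponding skew polynomial ring by a proper two-sided ideal is centrally normalizable over $D$. *)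

From HB Require Import structures.
From mathcomp Require Import all_boot all_algebra.
From mathcomp Require Import mpoly.
Set Implicit Arguments. Unset Strict Implicit. Unset Printing Implicit Defensive.
Import GRing.Theory.
Local Open Scope ring_scope.

Definition division_ring (D : unitRingType) : Prop :=
  forall x : D, x != 0 -> x \is a GRing.unit.

Definition proper_twosided_ideal (R : ringType) (I : {pred R}) : Prop :=
  [/\ 0 \in I,
      (forall x y, x \in I -> y \in I -> x + y \in I),
      (forall r x, x \in I -> r * x \in I),
      (forall r x, x \in I -> x * r \in I)
    & 1 \notin I].

Definition monom (S : ringType) (m : nat) (a : 'I_m -> S) (e : 'X_{1..m}) : S :=
  \prod_(i < m) a i ^+ e i.

Definition gen_subring (D S : ringType) (f : D -> S) (m : nat) (a : 'I_m -> S)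
    (x : S) : Prop :=
  forall P : S -> Prop,
    P 1 -> (forall y z, P y -> P z -> P (y - z)) ->
    (forall y z, P y -> P z -> P (y * z)) ->
    (forall b, P (f b)) -> (forall i, P (a i)) -> P x.

Definition finite_over_gen (D S : ringType) (f : D -> S) (m : nat) (a : 'I_m -> S)
    : Prop :=
  exists s : seq S, forall x : S,
    exists r : nat -> S,
      (forall j, (j < size s)%N -> gen_subring f a (r j)) /\
      x = \sum_(j < size s) r j * s`_j.

Definition centrally_normalizable (D S : ringType) (f : D -> S) : Prop :=
  exists (m : nat) (a : 'I_m -> S),
    [/\ (forall i j, a i * a j = a j * a i),
        (forall i (b : D), a i * f b = f b * a i),
        (* left algebraic independence over D: the monomials are left
           linearly independent over D *)
        (forall (es : seq 'X_{1..m}) (c : 'X_{1..m} -> D),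
            uniq es -> \sum_(e <- es) f (c e) * monom a e = 0 ->
            forall e, e \in es -> c e = 0)
      & finite_over_gen f a].

From HB Require Import structures.
From mathcomp Require Import all_boot all_algebra.
From mathcomp Require Import mpoly.
From mathcomp Require Import zify.
From Stdlib Require Import Classical.
Set Implicit Arguments. Unset Strict Implicit. Unset Printing Implicit Defensive.
Import GRing.Theory.
Local Open Scope ring_scope.

(* Nagata's proof of Noether normalization; it works over a division ring because
   the variables are central.  Let x_0, ..., x_k commute with each other and with D.
   If they are not left algebraically independent, take a nontrivial relation
   sum_e c_e x^e = 0, an integer r exceeding every exponent occurring in it, and
   y_i = x_(i+1) - x_0^(r^(i+1)).  Over the subring G generated by D and the y_i,
   each monomial x^e is monic in t = x_0 of degree sum_i e_i r^i; these degrees are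
   distinct base-r numerals, so the term of highest degree has a unit coefficient
   and t^N is a left G-combination of 1, t, ..., t^(N-1).  Hence the subring
   generated by D and the x_i is a finitely generated left G-module, and induction
   on the number of generators, applied to the y_i, finishes the proof. *)

Record is_subring (S : ringType) (G : S -> Prop) : Prop := IsSubring {
  subring1 : G 1;
  subringB : forall y z, G y -> G z -> G (y - z);
  subringM : forall y z, G y -> G z -> G (y * z) }.

Section SubringTheory.
Variables (S : ringType) (G : S -> Prop).
Hypothesis hG : is_subring G.

Lemma subring0 : G 0.
Proof. by rewrite -(subrr 1); apply: subringB (subring1 hG) (subring1 hG). Qed.

Lemma subringN y : G y -> G (- y).
Proof. by move=> hy; rewrite -sub0r; apply: subringB subring0 hy. Qed.

Lemma subringD y z : G y -> G z -> G (y + z).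
Proof. by move=> hy hz; rewrite -[z]opprK; apply: subringB hy (subringN hz). Qed.

Lemma subringX y e : G y -> G (y ^+ e).
Proof.
move=> hy; elim: e => [|e IH]; first by rewrite expr0; apply: subring1.
by rewrite exprS; apply: subringM.
Qed.

End SubringTheory.

Lemma commr_subring (S : ringType) (t : S) : is_subring (fun g => GRing.comm g t).
Proof.
split=> [|y z hy hz|y z hy hz]; first exact: commr_sym (commr1 t).
  by apply/commr_sym/commrB; apply/commr_sym.
by apply/commr_sym/commrM; apply/commr_sym.
Qed.

Section GeneratedSubring.
Variables (D S : ringType) (f : D -> S) (m : nat) (a : 'I_m -> S).

Lemma gen_subring_subring : is_subring (gen_subring f a).
Proof.
split=> [|y z hy hz|y z hy hz] P P1 PB PM Pf Pa //.
  by apply: (PB); [apply: hy | apply: hz].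
by apply: (PM); [apply: hy | apply: hz].
Qed.

Lemma gen_subring_f b : gen_subring f a (f b).
Proof. by move=> P _ _ _ Pf _; apply: Pf. Qed.

Lemma gen_subring_gen i : gen_subring f a (a i).
Proof. by move=> P _ _ _ _ Pa; apply: Pa. Qed.

Lemma gen_subring_min (P : S -> Prop) : is_subring P ->
  (forall b, P (f b)) -> (forall i, P (a i)) -> forall z, gen_subring f a z -> P z.
Proof. by case=> P1 PB PM Pf Pa z; apply. Qed.

End GeneratedSubring.

Section LeftSpan.
Variables (S : ringType) (G : S -> Prop).

Inductive lspan (s : seq S) : S -> Prop :=
  | lspan0 : lspan s 0
  | lspan_cons r u z : G r -> u \in s -> lspan s z -> lspan s (r * u + z).

Lemma lspan_term s r u : G r -> u \in s -> lspan s (r * u).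
Proof. by move=> hr us; rewrite -[_ * _]addr0; apply: lspan_cons (lspan0 s). Qed.

Lemma lspan_seq1 z : G z -> lspan [:: 1] z.
Proof. by move=> hz; rewrite -[z]mulr1; apply: lspan_term hz _; rewrite mem_seq1. Qed.

Lemma lspanD s u v : lspan s u -> lspan s v -> lspan s (u + v).
Proof.
elim=> [|r q z hr qs _ IH] hv; first by rewrite add0r.
by rewrite -addrA; apply: lspan_cons (IH hv).
Qed.

Lemma lspan_subset s s' z : {subset s <= s'} -> lspan s z -> lspan s' z.
Proof.
move=> ss'; elim=> [|r u w hr us _ IH]; first exact: lspan0.
exact: lspan_cons hr (ss' _ us) IH.
Qed.

Hypothesis hG : is_subring G.

Lemma lspan_mem s u : u \in s -> lspan s u.
Proof. by move=> us; rewrite -[u]mul1r; apply: lspan_term (subring1 hG) us. Qed.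

Lemma lspanN s u : lspan s u -> lspan s (- u).
Proof.
elim=> [|r q z hr qs _ IH]; first by rewrite oppr0; apply: lspan0.
by rewrite opprD -mulNr; apply: lspan_cons (subringN hG hr) qs IH.
Qed.

Lemma lspan_lmul s g z : G g -> lspan s z -> lspan s (g * z).
Proof.
move=> hg; elim=> [|r u w hr us _ IH]; first by rewrite mulr0; apply: lspan0.
by rewrite mulrDr mulrA; apply: lspan_cons (subringM hG hg hr) us IH.
Qed.

Lemma lspan_rmul s s' q z :
  (forall u, u \in s -> lspan s' (u * q)) -> lspan s z -> lspan s' (z * q).
Proof.
move=> sq; elim=> [|r u w hr us _ IH]; first by rewrite mul0r; apply: lspan0.
by rewrite mulrDl -mulrA; apply: lspanD IH; apply: lspan_lmul hr (sq u us).
Qed.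

Lemma lspan_lmul_comm s s' q z : (forall g, G g -> GRing.comm g q) ->
  (forall u, u \in s -> lspan s' (q * u)) -> lspan s z -> lspan s' (q * z).
Proof.
move=> qc sq; elim=> [|r u w hr us _ IH]; first by rewrite mulr0; apply: lspan0.
rewrite mulrDr mulrA -(qc r hr) -mulrA.
by apply: lspanD IH; apply: lspan_lmul hr (sq u us).
Qed.

Lemma lspanM s1 s2 s3 u v :
  (forall g q, G g -> q \in s1 -> GRing.comm g q) ->
  (forall q1 q2, q1 \in s1 -> q2 \in s2 -> lspan s3 (q1 * q2)) ->
  lspan s1 u -> lspan s2 v -> lspan s3 (u * v).
Proof.
move=> s1c s12 + hv; elim=> [|r q w hr qs _ IH]; first by rewrite mul0r; apply: lspan0.
rewrite mulrDl -mulrA; apply: lspanD IH; apply: lspan_lmul hr _.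
by apply: lspan_lmul_comm hv => [g hg|q2 q2s]; [apply: s1c | apply: s12].
Qed.

Lemma lspan_coefs s z : lspan s z -> exists r : nat -> S,
  (forall j, (j < size s)%N -> G (r j)) /\ z = \sum_(j < size s) r j * s`_j.
Proof.
elim=> [|r u w hr us _ [r' [hr' ->]]].
  exists (fun _ => 0); split=> [j _|]; first exact: subring0.
  by rewrite big1 // => j _; rewrite mul0r.
have us' : (index u s < size s)%N by rewrite index_mem.
pose j0 := Ordinal us'.
exists (fun j => (if j == index u s then r else 0) + r' j); split=> [j js|].
  apply: (subringD hG) (hr' j js).
  by case: ifP => _ //; apply: subring0.
rewrite [RHS](eq_bigr (fun j : 'I_(size s) =>
  (if j == j0 then r * s`_j else 0) + r' j * s`_j)) => [|j _]; last first.
  by rewrite mulrDl -val_eqE /=; case: ifP; rewrite ?mul0r.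
by rewrite big_split /= -big_mkcond big_pred1_eq /= nth_index.
Qed.

End LeftSpan.

Lemma lspan_trans (S : ringType) (Ga Gb : S -> Prop) (s s' : seq S) z :
  is_subring Ga -> (forall g, Gb g -> lspan Ga s g) -> lspan Gb s' z ->
  lspan Ga [seq u * v | u <- s, v <- s'] z.
Proof.
move=> hGa hGb; elim=> [|g v w hg vs _ IH]; first exact: lspan0.
apply: lspanD IH; apply: (lspan_rmul hGa _ (hGb _ hg)) => u us.
exact/(lspan_mem hGa)/allpairs_f.
Qed.

Definition powers (S : ringType) (t : S) (N : nat) := mkseq (fun j => t ^+ j) N.

Lemma mem_powers (S : ringType) (t : S) i N : (i < N)%N -> t ^+ i \in powers t N.
Proof. by move=> iN; apply: map_f; rewrite mem_iota. Qed.

Lemma mem_powersP (S : ringType) (t : S) N u :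
  u \in powers t N -> exists2 i, (i < N)%N & u = t ^+ i.
Proof. by case/mapP=> i; rewrite mem_iota => /andP [_ iN] ->; exists i. Qed.

Section Integrality.
Variables (S : ringType) (G : S -> Prop) (t : S).
Hypotheses (hG : is_subring G) (ht : forall g, G g -> GRing.comm g t).

Local Notation poly_lt N := (lspan G (powers t N)).

Definition monic_over N z := poly_lt N (z - t ^+ N).

Definition integral_over N := poly_lt N (t ^+ N).

Lemma powers_comm N g u : G g -> u \in powers t N -> GRing.comm g u.
Proof. by move=> hg /mem_powersP [i _ ->]; apply/commrX/ht. Qed.

Lemma poly_ltXX C i j : (i + j < C)%N -> poly_lt C (t ^+ i * t ^+ j).
Proof. by move=> ijC; rewrite -exprD; apply/(lspan_mem hG)/mem_powers. Qed.

Lemma poly_lt_mono A B z : (A <= B)%N -> poly_lt A z -> poly_lt B z.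
Proof.
move=> AB; apply: lspan_subset => _ /mem_powersP [i iA ->].
by apply: mem_powers; apply: leq_trans AB.
Qed.

Lemma poly_ltM A B u v : poly_lt A u -> poly_lt B v -> poly_lt (A + B) (u * v).
Proof.
apply: (lspanM hG) => [g q hg|_ _ /mem_powersP [i iA ->] /mem_powersP [j jB ->]].
  exact: powers_comm.
by apply: poly_ltXX; rewrite -addnS leq_add // ltnW.
Qed.

Lemma monic_overXn N : monic_over N (t ^+ N).
Proof. by rewrite /monic_over subrr; apply: lspan0. Qed.

Lemma monic_over1 : monic_over 0 1.
Proof. by rewrite -(expr0 t); apply: monic_overXn. Qed.

Lemma monic_over_addl N y : G y -> (0 < N)%N -> monic_over N (y + t ^+ N).
Proof.
move=> hy N0; rewrite /monic_over addrK -[y]mulr1 -(expr0 t).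
exact: lspan_term hy (mem_powers _ N0).
Qed.

Lemma monic_overM A B u v :
  monic_over A u -> monic_over B v -> monic_over (A + B) (u * v).
Proof.
rewrite /monic_over => hu hv; rewrite -[u](subrK (t ^+ A)) -[v](subrK (t ^+ B)).
move: (u - t ^+ A) (v - t ^+ B) hu hv => p q hp hq.
rewrite exprD mulrDl !mulrDr [_ + (_ + _)]addrA addrK.
apply: lspanD; [apply: lspanD; first exact: poly_ltM|].
- apply: (lspan_rmul hG) hp => _ /mem_powersP [i iA ->].
  by apply: poly_ltXX; rewrite ltn_add2r.
- apply: (lspan_lmul_comm hG) hq => [g hg|_ /mem_powersP [j jB ->]].
    exact/commrX/ht.
  by apply: poly_ltXX; rewrite ltn_add2l.
Qed.

Lemma monic_overX N z e : monic_over N z -> monic_over (N * e) (z ^+ e).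
Proof.
move=> hz; elim: e => [|e IH]; first by rewrite muln0 expr0; apply: monic_over1.
by rewrite exprSr mulnSr; apply: monic_overM.
Qed.

Lemma monic_over_monom m (x : 'I_m -> S) (w : 'I_m -> nat) (e : 'X_{1..m}) :
  (forall i, monic_over (w i) (x i)) ->
  monic_over (\sum_(i < m) e i * w i)%N (monom x e).
Proof.
move=> xw; rewrite /monom; elim/big_rec2: _ => [|i N z _ hz]; first exact: monic_over1.
by rewrite mulnC; apply: monic_overM hz; apply: monic_overX.
Qed.

Lemma poly_lt_monic N z : monic_over N z -> poly_lt N.+1 z.
Proof.
move=> hz; rewrite -(subrK (t ^+ N) z); apply: lspanD.
  exact: poly_lt_mono hz.
exact/(lspan_mem hG)/mem_powers.
Qed.

Lemma integral_over_relation (I : eqType) (es : seq I) (g z : I -> S)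
    (w : I -> nat) e0 h :
  uniq es -> e0 \in es -> \sum_(e <- es) g e * z e = 0 ->
  (forall e, e \in es -> G (g e) /\ monic_over (w e) (z e)) ->
  (forall e, e \in es -> e != e0 -> g e != 0 -> (w e < w e0)%N) ->
  G h -> h * g e0 = 1 -> integral_over (w e0).
Proof.
move=> ues e0es + hes hlt hh hg0; rewrite (bigD1_seq e0) //= => rel.
have rest : poly_lt (w e0) (\sum_(e <- es | e != e0) g e * z e).
  rewrite big_seq_cond.
  apply: big_ind => [|u v|e /andP [ees ne]]; [exact: lspan0 | exact: lspanD |].
  have [hge hze] := hes e ees.
  have [-> | nz] := eqVneq (g e) 0; first by rewrite mul0r; apply: lspan0.
  exact/(lspan_lmul hG hge)/(poly_lt_mono (hlt e ees ne nz))/poly_lt_monic.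
have [hg hz] := hes e0 e0es.
have lead : poly_lt (w e0) (g e0 * z e0 - g e0 * t ^+ w e0).
  by rewrite -mulrBr; apply: lspan_lmul.
rewrite /integral_over -[t ^+ _]mul1r -hg0 -mulrA; apply: (lspan_lmul hG hh).
have -> : g e0 * t ^+ w e0 =
    - ((g e0 * z e0 - g e0 * t ^+ w e0) + \sum_(e <- es | e != e0) g e * z e).
  by rewrite addrAC rel sub0r opprK.
exact/(lspanN hG)/lspanD.
Qed.

Section Integral.
Variable N : nat.
Hypothesis tN : integral_over N.

Lemma integral_poly_lt_powers j : poly_lt N (t ^+ j).
Proof.
elim/ltn_ind: j => j IH; have [jN|Nj] := ltnP j N.
  exact/(lspan_mem hG)/mem_powers.
rewrite -(subnK Nj) exprD.
apply: (lspan_lmul_comm hG) tN => [g hg|_ /mem_powersP [i iN ->]].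
  exact/commrX/ht.
by rewrite -exprD; apply: IH; lia.
Qed.

Lemma integral_poly_ltM u v : poly_lt N u -> poly_lt N v -> poly_lt N (u * v).
Proof.
apply: (lspanM hG) => [g q hg|_ _ /mem_powersP [i _ ->] /mem_powersP [j _ ->]].
  exact: powers_comm.
by rewrite -exprD; apply: integral_poly_lt_powers.
Qed.

Lemma integral_poly_lt_subring : is_subring (poly_lt N).
Proof.
split=> [|u v hu hv|]; last exact: integral_poly_ltM.
  by rewrite -(expr0 t); apply: integral_poly_lt_powers.
exact/lspanD/(lspanN hG).
Qed.

Lemma integral_poly_lt_coef g : G g -> poly_lt N g.
Proof.
move=> hg; rewrite -[g]mulr1 -(expr0 t).
exact/(lspan_lmul hG hg)/integral_poly_lt_powers.
Qed.

End Integral.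

End Integrality.

Lemma digit_cons_inj (r a b A B : nat) : (a < r)%N -> (b < r)%N ->
  (a + r * A = b + r * B)%N -> a = b /\ A = B.
Proof.
move=> ar br E; have r0 : (0 < r)%N by apply: leq_ltn_trans ar.
have {}E : (A * r + a = B * r + b)%N by rewrite addnC mulnC E addnC mulnC.
have := congr1 (modn^~ r) E; rewrite /= !modnMDl !modn_small // => ab.
have := congr1 (divn^~ r) E; rewrite /= !divnMDl // !divn_small // !addn0 => AB.
by split.
Qed.

Lemma digits_inj (r n : nat) (d d' : 'I_n -> nat) :
  (forall i, d i < r)%N -> (forall i, d' i < r)%N ->
  (\sum_(i < n) d i * r ^ i = \sum_(i < n) d' i * r ^ i)%N -> d =1 d'.
Proof.
elim: n d d' => [|n IH] d d' hd hd' E i; first by case: i.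
have shift (e : 'I_n.+1 -> nat) : (\sum_(i < n) e (lift ord0 i) * r ^ lift ord0 i =
    r * \sum_(i < n) e (lift ord0 i) * r ^ i)%N.
  by rewrite big_distrr; apply: eq_bigr => j _; rewrite expnS mulnCA.
rewrite !big_ord_recl !shift /= !expn0 !muln1 in E.
have [E0 E1] := digit_cons_inj (hd ord0) (hd' ord0) E.
have {}IH := IH _ _ (fun j => hd _) (fun j => hd' _) E1.
by case: (unliftP ord0 i) => [j|] ->.
Qed.

Lemma seq_argmax (T : eqType) (s : seq T) (P : pred T) (F : T -> nat) x0 :
  x0 \in s -> P x0 ->
  exists2 x, (x \in s) && P x & forall y, y \in s -> P y -> (F y <= F x)%N.
Proof.
move=> x0s Px0; pose Q n := has (fun y => P y && (F y == n)) s.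
have exQ : exists n, Q n by exists (F x0); apply/hasP; exists x0; rewrite ?Px0 ?eqxx.
have ubQ n : Q n -> (n <= \max_(y <- s | P y) F y)%N.
  by case/hasP=> y ys /andP [Py /eqP <-]; apply: leq_bigmax_seq.
case: (ex_maxnP exQ ubQ) => n /hasP [x xs /andP [Px /eqP Fx]] nmax.
exists x; first by rewrite xs Px.
by move=> y ys Py; rewrite Fx; apply: nmax; apply/hasP; exists y; rewrite ?Py ?eqxx.
Qed.

Lemma division_rmorph_eq0 (D : unitRingType) (S : ringType)
    (f : {rmorphism D -> S}) c :
  division_ring D -> (f c == 0) = (c == 0).
Proof.
move=> hD; apply/eqP/eqP => [fc0|->]; last exact: rmorph0.
apply/eqP; apply: contraT => /hD cU; have := oner_neq0 S.
by rewrite -(rmorph1 f) -(mulVr cU) rmorphM fc0 mulr0 eqxx.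
Qed.

Definition left_alg_indep (D S : ringType) (f : D -> S) m (a : 'I_m -> S) :=
  forall (es : seq 'X_{1..m}) (c : 'X_{1..m} -> D), uniq es ->
    \sum_(e <- es) f (c e) * monom a e = 0 -> forall e, e \in es -> c e = 0.

Section Nagata.
Variables (D : unitRingType) (S : ringType) (f : {rmorphism D -> S}).
Variables (k : nat) (x : 'I_k.+1 -> S).
Hypotheses (xc : forall i j, GRing.comm (x i) (x j))
           (xf : forall i b, GRing.comm (x i) (f b)).

Local Notation t := (x ord0).

Definition nagata_shift r (i : 'I_k) := x (lift ord0 i) - t ^+ (r ^ i.+1).

Local Notation G r := (gen_subring f (nagata_shift r)).

Lemma comm_nagata_shift r w i :
  (forall l, GRing.comm (x l) w) -> GRing.comm (nagata_shift r i) w.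
Proof.
move=> xw; apply/commr_sym/commrB; first exact/commr_sym.
exact/commrX/commr_sym.
Qed.

Lemma nagata_shift_comm r i j : GRing.comm (nagata_shift r i) (nagata_shift r j).
Proof. by apply: comm_nagata_shift => l; apply/commr_sym/comm_nagata_shift. Qed.

Lemma nagata_shift_commf r i b : GRing.comm (nagata_shift r i) (f b).
Proof. exact: comm_nagata_shift. Qed.

Lemma nagata_centralizes r g : G r g -> GRing.comm g t.
Proof.
apply: (gen_subring_min (commr_subring t)) => [b|i]; first exact/commr_sym.
exact: comm_nagata_shift.
Qed.

Lemma gen_subring_poly_lt r N : integral_over (G r) t N ->
  forall z, gen_subring f x z -> lspan (G r) (powers t N) z.
Proof.
move=> tN; have hG := gen_subring_subring f (nagata_shift r).
have ht := @nagata_centralizes r.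
apply: (gen_subring_min (integral_poly_lt_subring hG ht tN)) => [b|i].
  exact: (integral_poly_lt_coef hG ht tN (gen_subring_f b)).
case: (unliftP ord0 i) => [j|] ->; last exact: (integral_poly_lt_powers hG ht tN 1).
rewrite -[x (lift ord0 j)](subrK (t ^+ (r ^ j.+1))); apply: lspanD.
  exact: (integral_poly_lt_coef hG ht tN (gen_subring_gen j)).
exact: integral_poly_lt_powers.
Qed.

Hypothesis hD : division_ring D.

Lemma nagata_integral : ~ left_alg_indep f x -> exists r N, integral_over (G r) t N.
Proof.
move=> dep.
have [es [c [ues rel [e0 e0es ce0]]]] : exists es c, [/\ uniq es,
    \sum_(e <- es) f (c e) * monom x e = 0 & exists2 e0, e0 \in es & c e0 != 0].
  apply: NNPP => norel; apply: dep => es c ues rel e ees; apply: NNPP => /eqP ce.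
  by apply: norel; exists es, c; split=> //; exists e.
pose r := (\max_(e <- es) \max_(i < k.+1) e i).+1.
pose wt (e : 'X_{1..k.+1}) := (\sum_(i < k.+1) e i * r ^ i)%N.
have hG := gen_subring_subring f (nagata_shift r).
have ht := @nagata_centralizes r.
have digit_lt e i : e \in es -> (e i < r)%N.
  move=> ees; rewrite ltnS; apply: leq_trans (leq_bigmax_seq _ ees isT).
  exact: leq_bigmax.
have [e1 /andP [e1es ce1] e1max] :=
  seq_argmax (P := fun e => c e != 0) wt e0es ce0.
exists r, (wt e1).
apply: (integral_over_relation hG (g := fun e => f (c e)) (z := monom x) (w := wt)
  (h := f (c e1)^-1) ues e1es rel).
- move=> e _; split; first exact: gen_subring_f.
  apply: (monic_over_monom hG ht) => i; case: (unliftP ord0 i) => [j|] ->.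
    rewrite -[x (lift ord0 j)](subrK (t ^+ (r ^ j.+1))).
    by apply: monic_over_addl; [apply: gen_subring_gen | rewrite expn_gt0].
  exact: (monic_overXn _ _ 1).
- move=> e ees ne; rewrite division_rmorph_eq0 // => nce.
  rewrite ltn_neqAle e1max // andbT; apply: contra ne => /eqP E.
  apply/eqP/mnmP; apply: digits_inj E => i; exact: digit_lt.
- exact: gen_subring_f.
- by rewrite -rmorphM mulVr ?rmorph1 //; apply: hD.
Qed.

End Nagata.

Section Normalization.
Variables (D : unitRingType) (S : ringType) (f : {rmorphism D -> S}).
Hypothesis hD : division_ring D.

Lemma left_alg_indep0 (x : 'I_0 -> S) : left_alg_indep f x.
Proof.
move=> es c ues + e ees; rewrite (bigD1_seq e) //= big1_seq => [|e' /andP [ne _]].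
  rewrite addr0 /monom big_ord0 mulr1 => /eqP.
  by rewrite division_rmorph_eq0 // => /eqP.
by case/eqP: ne; apply/mnmP; case.
Qed.

Lemma noether_normalization k (x : 'I_k -> S) :
  (forall i j, GRing.comm (x i) (x j)) -> (forall i b, GRing.comm (x i) (f b)) ->
  exists m (a : 'I_m -> S),
    [/\ forall i j, GRing.comm (a i) (a j), forall i b, GRing.comm (a i) (f b),
        left_alg_indep f a &
        exists s, forall z, gen_subring f x z -> lspan (gen_subring f a) s z].
Proof.
elim: k x => [|k IH] x xc xf.
  exists 0, x; split=> //; first exact: left_alg_indep0.
  by exists [:: 1]; apply: lspan_seq1.
have [indep|dep] := classic (left_alg_indep f x).
  by exists k.+1, x; split=> //; exists [:: 1]; apply: lspan_seq1.
have [r [N tN]] := nagata_integral xc xf hD dep.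
have [m [a [ac af ai [s hs]]]] :=
  IH _ (nagata_shift_comm xc r) (nagata_shift_commf xf r).
exists m, a; split=> //; exists [seq u * v | u <- s, v <- powers (x ord0) N] => z hz.
exact: lspan_trans (gen_subring_subring f a) hs (gen_subring_poly_lt xc xf tN hz).
Qed.

End Normalization.

Lemma gen_subring_mpoly (R : ringType) n (S : ringType)
    (pi : {rmorphism {mpoly R[n]} -> S}) p :
  gen_subring (fun r : R => pi r%:MP) (fun i => pi 'X_i) (pi p).
Proof.
have hG := gen_subring_subring (fun r : R => pi r%:MP) (fun i => pi 'X_i).
rewrite (mpolyE p) rmorph_sum.
apply: big_ind => [|u v|e _]; [exact: subring0 | exact: subringD |].
rewrite -mul_mpolyC rmorphM mpolyXE_id rmorph_prod.
apply: (subringM hG (gen_subring_f _)).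
apply: big_ind => [|u v|i _]; [exact: subring1 | exact: subringM |].
by rewrite rmorphXn; apply: (subringX hG); apply: gen_subring_gen.
Qed.

Theorem theorem4p3 (D : unitRingType) (hD : division_ring D) (n : nat)
    (I : {pred {mpoly D[n]}}) (hI : proper_twosided_ideal I)
    (S : ringType) (pi : {rmorphism {mpoly D[n]} -> S})
    (pi_surj : forall y : S, exists p, pi p = y)
    (pi_ker : forall p, pi p = 0 <-> p \in I) :
  centrally_normalizable (fun r : D => pi r%:MP).
Proof.
have xc i j : GRing.comm (pi 'X_i) (pi 'X_j).
  by rewrite /GRing.comm -!rmorphM; congr (pi _); apply: commr_mpolyX.
have xf i b : GRing.comm (pi 'X_i) (pi b%:MP).
  by rewrite /GRing.comm -!rmorphM; congr (pi _); apply/esym/commr_mpolyX.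
have [m [a [ac af ai [s hs]]]] :=
  noether_normalization (f := pi \o @mpolyC n D) hD xc xf.
exists m, a; split=> //; exists s => z; have [p <-] := pi_surj z.
exact: (lspan_coefs (gen_subring_subring _ _) (hs _ (gen_subring_mpoly (pi := pi) p))).
Qed.
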